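(* Let $X$ be an $X$-set parameter, let $G$ and $G'$ be graphs with no isolated vertices, and suppose $\varphi:\mathscr{X}^{\rm TAR}(G)\to\mathscr{X}^{\rm TAR}(G')$ is a graph isomorphism. Then $|\varphi(S)|=|S|$ for every $X$-set $S$ of $G$ if and only if there exists a bijection $\psi:V(G)\to V(G')$ such that $\psi(S)=\varphi(S)$ for every $X$-set $S$ of $G$ (where $\psi(S)=\{\psi(s):s\in S\}$).
   Context: All graphs are simple, finite, with nonempty vertex set. An $X$-set parameter is a graph parameter $X(G)$ defined as the minimum cardinality of an $X$-set of $G$, where the $X$-sets of each graph are subsets of its vertex set determined by some property satisfying: (1) supersets (within $V(G)$) of $X$-sets are $X$-sets; (2) the empty set is never an $X$-set; (3) an $X$-set of a disconnected graph is the union of an $X$-set of each component; (4) if $G$ has no isolated vertices, every set of $|V(G)|-1$ vertices is an $X$-set. The $X$-TAR graph $\mathscr{X}^{\rm TAR}(G)$ has as vertices all $X$-sets of $G$, with $S_1,S_2$ adjacent iff $|S_1\ominus S_2|=1$ (symmetric difference). *)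

From mathcomp Require Import all_boot.
Set Implicit Arguments. Unset Strict Implicit. Unset Printing Implicit Defensive.

Definition is_graph (T : finType) (e : rel T) : Prop :=
  [/\ 0 < #|T|, symmetric e & irreflexive e].

Definition no_isolated (T : finType) (e : rel T) : Prop :=
  forall x : T, exists y : T, e x y.

Definition disconnected (T : finType) (e : rel T) : Prop :=
  exists x y : T, ~~ connect e x y.

Definition comp (T : finType) (e : rel T) (x : T) : {set T} :=
  [set y | connect e x y].

Definition ind_type (T : finType) (C : {set T}) : finType := {y : T | y \in C}.
Definition ind_rel (T : finType) (e : rel T) (C : {set T}) : rel (ind_type C) :=
  fun u v => e (val u) (val v).
Definition restr (T : finType) (C : {set T}) (S : {set T}) : {set ind_type C} :=
  [set u : ind_type C | val u \in S].

Arguments ind_rel [T] e C.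
Arguments restr [T] C S.

(* A graph property selecting, for every graph, its X-sets. *)
Definition Xprop := forall (T : finType), rel T -> pred {set T}.

Definition is_Xset_param (X : Xprop) : Prop :=
  (forall (T : finType) (e : rel T) (S S' : {set T}), is_graph e ->
     X T e S -> S \subset S' -> X T e S') /\
  (forall (T : finType) (e : rel T), is_graph e -> ~~ X T e set0) /\
  (* (3) X-sets of a disconnected graph = unions of X-sets of the components *)
  (forall (T : finType) (e : rel T) (S : {set T}), is_graph e -> disconnected e ->
     (X T e S <-> forall x : T,
        X (ind_type (comp e x)) (ind_rel e (comp e x)) (restr (comp e x) S))) /\
  (forall (T : finType) (e : rel T) (S : {set T}), is_graph e -> no_isolated e ->
     #|S| = #|T| - 1 -> X T e S).

Definition symdiff (T : finType) (A B : {set T}) : {set T} := (A :\: B) :|: (B :\: A).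

Definition TARV (X : Xprop) (T : finType) (e : rel T) : finType :=
  {S : {set T} | X T e S}.
Definition TARadj (X : Xprop) (T : finType) (e : rel T) : rel (TARV X e) :=
  fun A B => #|symdiff (val A) (val B)| == 1.

Arguments TARadj X [T] e.

Definition graph_iso (U V : finType) (eU : rel U) (eV : rel V) (f : U -> V) : Prop :=
  bijective f /\ forall a b : U, eV (f a) (f b) = eU a b.

From mathcomp Require Import all_boot.
From mathcomp Require Import zify.

(* A cardinality-preserving isomorphism phi of the TAR graphs maps each
   co-singleton [set~ v] to a co-singleton [set~ psi v]; psi is injective,
   hence bijective since both graphs have the same order.  An edge
   S ~ w |: S is sent to an edge between sets whose sizes differ by one, so
   the images are nested and phi is monotone.  Thus for x \notin S,
   phi S \subset phi [set~ x] = [set~ psi x], i.e. phi S \subset psi @: S,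
   with equality by counting. *)

Lemma card_symdiff (T : finType) (A B : {set T}) :
  #|symdiff A B| = #|A :\: B| + #|B :\: A|.
Proof.
rewrite /symdiff cardsU.
suff -> : (A :\: B) :&: (B :\: A) = set0 by rewrite cards0 subn0.
by apply/setP=> x; rewrite !inE; case: (x \in A); case: (x \in B).
Qed.

Lemma symdiff1_subset (T : finType) (A B : {set T}) :
  #|symdiff A B| = 1 -> #|A| < #|B| -> A \subset B.
Proof.
rewrite card_symdiff -setD_eq0 -cards_eq0 => AB1 ltAB.
have := cardsID B A; have := cardsID A B; rewrite setIC; lia.
Qed.

Lemma symdiff_setU1 (T : finType) (S : {set T}) (w : T) :
  w \notin S -> symdiff S (w |: S) = [set w].
Proof.
move=> wS; apply/setP=> x; rewrite !inE.
by case: (eqVneq x w) => [->|]; [rewrite (negbTE wS) | case: (x \in S)].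
Qed.

Lemma cards_setC_eq1 (T : finType) (A : {set T}) :
  #|~: A| = 1 -> exists w, A = [set~ w].
Proof. by move/eqP/cards1P=> [w Aw]; exists w; rewrite -Aw setCK. Qed.

Section CardPreservingIso.

Context {T T' : finType} {F : pred {set T}} {F' : pred {set T'}}.

Hypothesis F_superset : forall A B : {set T}, F A -> A \subset B -> F B.
Hypothesis F_setT : F setT.
Hypothesis F_setC1 : forall v, F [set~ v].
Hypothesis F'_setT : F' setT.

Variable phi : {A | F A} -> {A | F' A}.

Hypothesis phi_bij : bijective phi.
Hypothesis phi_adj : forall A B,
  #|symdiff (val A) (val B)| == 1 -> #|symdiff (val (phi A)) (val (phi B))| == 1.
Hypothesis phi_card : forall A, #|val (phi A)| = #|val A|.

Let vtx {A : {set T}} (FA : F A) : {A | F A} := exist _ A FA.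
Let vtx' {A : {set T'}} (FA : F' A) : {A | F' A} := exist _ A FA.

Lemma eq_card_ground : #|T| = #|T'|.
Proof.
have [phi' _ phi'K] := phi_bij.
apply/eqP; rewrite eqn_leq; apply/andP; split.
  by rewrite -cardsT -[#|setT|]/#|val (vtx F_setT)| -phi_card max_card.
rewrite -[#|T'|]cardsT -[#|setT|]/#|val (vtx' F'_setT)| -(phi'K (vtx' _)).
by rewrite phi_card max_card.
Qed.

Lemma phi_setU1_subset (S Sw : {A | F A}) (w : T) :
  w \notin val S -> val Sw = w |: val S -> val (phi S) \subset val (phi Sw).
Proof.
move=> wS defSw; apply: symdiff1_subset.
  by apply/eqP/phi_adj; rewrite defSw symdiff_setU1 ?cards1.
by rewrite !phi_card defSw cardsU1 wS.
Qed.

Lemma phi_mono (S S' : {A | F A}) :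
  val S \subset val S' -> val (phi S) \subset val (phi S').
Proof.
move defn: #|val S' :\: val S| => n; elim: n S defn => [|n IHn] S defn SS'.
  suff -> : S = S' by [].
  by apply/val_inj/eqP; rewrite eqEsubset SS' -setD_eq0 -cards_eq0 defn.
have [w wS'S] : exists w, w \in val S' :\: val S by apply/card_gt0P; rewrite defn.
have /andP [wS wS'] : (w \notin val S) && (w \in val S') by move: wS'S; rewrite inE.
pose Sw := vtx (F_superset _ _ (valP S) (subsetUr [set w] (val S))).
have /subset_trans -> // : val (phi S) \subset val (phi Sw).
  exact: phi_setU1_subset wS _.
apply: IHn.
  by move: defn; rewrite /= setUC -setDDl (cardsD1 w) wS'S => -[].
by rewrite subUset sub1set wS' SS'.
Qed.

Lemma phi_setC1 (v : T) : exists w, val (phi (vtx (F_setC1 v))) == [set~ w].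
Proof.
suff [w ->] : exists w, val (phi (vtx (F_setC1 v))) = [set~ w] by exists w.
apply: cards_setC_eq1.
have: 0 < #|T'| by rewrite -eq_card_ground; apply/card_gt0P; exists v.
have := cardsC (val (phi (vtx (F_setC1 v)))).
rewrite phi_card /= cardsC1 -subn1 eq_card_ground -!cardsT.
lia.
Qed.

Let psi (v : T) : T' := xchoose (phi_setC1 v).

Lemma phi_setC1_psi (v : T) : val (phi (vtx (F_setC1 v))) = [set~ psi v].
Proof. exact/eqP/(xchooseP (phi_setC1 v)). Qed.

Lemma psi_inj : injective psi.
Proof.
move=> u v psiuv; apply/set1_inj/setC_inj.
suff /(congr1 val) : vtx (F_setC1 u) = vtx (F_setC1 v) by [].
by apply: (bij_inj phi_bij); apply: val_inj; rewrite !phi_setC1_psi psiuv.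
Qed.

Lemma psi_bij : bijective psi.
Proof. by apply: inj_card_bij psi_inj _; rewrite eq_card_ground. Qed.

Lemma imset_psi (S : {A | F A}) : psi @: val S = val (phi S).
Proof.
have [psi' _ psi'K] := psi_bij.
apply/esym/eqP; rewrite eqEcard card_imset ?phi_card ?leqnn ?andbT; last exact: psi_inj.
apply/subsetP=> y Sy; rewrite -(psi'K y) imset_f //.
apply/negPn/negP=> notS.
have := @phi_mono S (vtx (F_setC1 (psi' y))).
rewrite subsetC sub1set inE notS => /(_ isT).
by rewrite phi_setC1_psi psi'K => /subsetP /(_ y Sy); rewrite !inE eqxx.
Qed.

Lemma exists_vertex_bij :
  exists f : T -> T', bijective f /\ forall S : {A | F A}, f @: val S = val (phi S).
Proof. by exists psi; split; [exact: psi_bij | exact: imset_psi]. Qed.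

End CardPreservingIso.

Section XsetParam.

Context {X : Xprop} {T : finType} {e : rel T}.
Hypotheses (HX : is_Xset_param X) (HG : is_graph e) (HnG : no_isolated e).

Lemma Xset_setC1 (v : T) : X T e [set~ v].
Proof. by case: HX => _ [_ [_ X_card]]; apply: X_card; rewrite ?cardsC1 ?subn1. Qed.

Lemma Xset_setT : X T e setT.
Proof.
have [/card_gt0P [v _] _ _] := HG; case: HX => X_superset _.
exact: X_superset _ _ _ _ HG (Xset_setC1 v) (subsetT _).
Qed.

End XsetParam.

Theorem theorem2p12 (X : Xprop) (HX : is_Xset_param X)
  (T T' : finType) (e : rel T) (e' : rel T')
  (HG : is_graph e) (HG' : is_graph e')
  (HnG : no_isolated e) (HnG' : no_isolated e')
  (phi : TARV X e -> TARV X e')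
  (Hphi : graph_iso (TARadj X e) (TARadj X e') phi) :
  (forall S : TARV X e, #|val (phi S)| = #|val S|) <->
  (exists psi : T -> T', bijective psi /\
     forall S : TARV X e, psi @: val S = val (phi S)).
Proof.
have X_superset := HX.1; case: Hphi => phi_bij phi_adj.
split=> [phi_card | [psi [psi_bij psiE]] S];
  last by rewrite -psiE (card_imset _ (bij_inj psi_bij)).
have phi_adj1 A B : #|symdiff (val A) (val B)| == 1 ->
    #|symdiff (val (phi A)) (val (phi B))| == 1.
  by rewrite -[_ == 1]/(TARadj X e A B) -phi_adj.
exact: (exists_vertex_bij (fun A B => X_superset _ _ A B HG)
  (Xset_setT HX HG HnG) (Xset_setC1 HX HG HnG) (Xset_setT HX HG' HnG')
  phi phi_bij phi_adj1 phi_card).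
Qed.
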